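(* For every integer $n>2$, the Euclidean space $\mathbb R^n$ is strongly discrete homogeneous.
   Context: A subset $D$ of $X$ is discrete if each point of $X$ has a neighbourhood containing at most one point of $D$. A Hausdorff space $X$ is strongly discrete homogeneous (sDH) if for any two discrete subsets $A,B$ of $X$ and any bijection $f\colon A\to B$, $f$ extends to a homeomorphism of $X$ onto itself. *)

From HB Require Import structures.
From mathcomp Require Import all_boot all_order all_algebra.
From mathcomp Require Import all_classical all_reals all_analysis.
Import numFieldNormedType.Exports.
Set Implicit Arguments. Unset Strict Implicit. Unset Printing Implicit Defensive.
Import Order.TTheory GRing.Theory Num.Theory.
Local Open Scope classical_set_scope.

Definition discrete_subset {X : topologicalType} (D : set X) : Prop :=
  forall x : X, exists2 U : set X, nbhs x U &
    forall a b, D a -> D b -> U a -> U b -> a = b.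

Definition self_homeomorphism {X : topologicalType} (h : X -> X) : Prop :=
  exists g : X -> X,
    [/\ cancel h g, cancel g h, continuous h & continuous g].

(* Strongly discrete homogeneous: Hausdorff, and every bijection between
   discrete subsets A, B (given as a map f : X -> X restricting to a
   bijection A -> B) extends to a self-homeomorphism of X. *)
Definition sDH (X : topologicalType) : Prop :=
  hausdorff_space X /\
  forall (A B : set X) (f : X -> X),
    discrete_subset A -> discrete_subset B -> set_bij A B f ->
    exists h : X -> X, self_homeomorphism h /\ forall a, A a -> h a = f a.

From HB Require Import structures.
From mathcomp Require Import all_boot all_order all_algebra.
From mathcomp Require Import all_classical all_reals all_analysis.
From mathcomp Require Import finmap ring lra.
Import numFieldNormedType.Exports.
Set Implicit Arguments. Unset Strict Implicit. Unset Printing Implicit Defensive.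
Import Order.TTheory GRing.Theory Num.Theory.
Local Open Scope classical_set_scope.
Local Open Scope ring_scope.

(* A discrete subset of R^n is countable and meets every compact set in finitely
   many points.  After translation by a generic centre the squared norm is
   injective on it, and its set of squared norms is discrete in R.  Rotating
   each sphere of squared radius r in the (i0, k)-plane through an angle th r,
   where th is a continuous (Tietze) extension of suitably chosen angles, is a
   homeomorphism killing the k-th coordinate of every point of the set; doing
   this for all k != i0 moves the set onto the i0-th axis.  Two discrete
   subsets of that axis are matched by three shears x |-> x + phi (x_i) e_j,
   whose profiles phi are again Tietze extensions from discrete subsets of R.
   Only two coordinates are needed, so the argument works for all n >= 2. *)

Section Homeomorphisms.
Context {X : topologicalType}.

Lemma self_homeomorphism_comp (h k : X -> X) :
  self_homeomorphism h -> self_homeomorphism k -> self_homeomorphism (h \o k).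
Proof.
move=> [h' [hK h'K ch ch']] [k' [kK k'K ck ck']].
exists (k' \o h'); split => [x|x|x|x] /=.
- by rewrite hK kK.
- by rewrite k'K h'K.
- exact: continuous_comp (ck x) (ch _).
- exact: continuous_comp (ch' x) (ck' _).
Qed.

Lemma self_homeomorphism_inv (h : X -> X) : self_homeomorphism h ->
  exists h', [/\ self_homeomorphism h', cancel h h' & cancel h' h].
Proof. by move=> [h' [hK h'K ch ch']]; exists h'; split => //; exists h. Qed.

End Homeomorphisms.

Lemma translation_homeo {K : numFieldType} {V : normedModType K} (v : V) :
  self_homeomorphism (fun x => x + v).
Proof.
exists (fun x => x - v); split => [x|x|x|x]; rewrite ?addrK ?subrK //.
- by apply: (@continuousD K V V id); [exact: cvg_id|exact: cst_continuous].
- by apply: (@continuousB K V V id); [exact: cvg_id|exact: cst_continuous].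
Qed.

Section DiscreteSubsets.
Context {X : topologicalType}.

Lemma discrete_subset_image (h : X -> X) (A : set X) :
  self_homeomorphism h -> discrete_subset A -> discrete_subset (h @` A).
Proof.
move=> [h' [hK h'K _ ch']] dA y; have [U Uy UA] := dA (h' y).
exists (h' @^-1` U); first exact: ch'.
by move=> _ _ [a Aa <-] [b Ab <-] /=; rewrite !hK => Ua Ub; rewrite (UA a b).
Qed.

Lemma discrete_subset_closed (D : set X) :
  accessible_space X -> discrete_subset D -> closed D.
Proof.
move=> T1 dD x Dx; apply: contrapT => nDx.
have [U Ux UD] := dD x.
have [s [Ds Us]] := Dx U Ux.
have xNs : (~` [set s]) x by move=> /= xs; apply: nDx; rewrite xs.
have nbhs_xNs : nbhs x (~` [set s]).
  by apply: open_nbhs_nbhs; split => //; exact/closed_openC/accessible_closed_set1.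
have [t [Dt [Ut tNs]]] := Dx _ (filterI Ux nbhs_xNs).
by apply: tNs; exact: UD.
Qed.

Lemma discrete_subset_within {Y : topologicalType} (D : set X) (f : X -> Y) :
  discrete_subset D -> {within D, continuous f}.
Proof.
move=> dD x W /= fxW; suff : nbhs_subspace x (f @^-1` W) by [].
have [Dx|nDx] := pselect (D x); last first.
  by rewrite -(@nbhs_subspace_out _ D x nDx) /globally /= => y ->; exact: nbhs_singleton fxW.
rewrite -(@nbhs_subspace_in _ D x Dx); have [U Ux UD] := dD x.
have Ux0 := nbhs_singleton Ux; apply: filterS Ux => y Uy Dy.
by rewrite (UD y x Dy Dx Uy Ux0); exact: nbhs_singleton fxW.
Qed.

End DiscreteSubsets.

Lemma discrete_compact_finite {X : ptopologicalType} (A K : set X) :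
  discrete_subset A -> compact K -> finite_set (A `&` K).
Proof.
move=> dA cK; rewrite compact_cover in cK.
have /choice[U UA] : forall x : X, exists U : set X,
    nbhs x U /\ forall a b, A a -> A b -> U a -> U b -> a = b.
  by move=> x; have [U ? ?] := dA x; exists U.
have [D _ KD] : finite_subset_cover K (fun x => (U x)°) K.
  apply: cK => [x _|x Kx]; first exact: open_interior.
  by exists x => //; exact: nbhs_singleton (nbhs_interior (UA x).1).
have fin : finite_set (\bigcup_(x in [set` D]) (A `&` (U x)°)).
  apply: bigcup_finite => [|x _]; first exact: finite_fset.
  have [[a0 [Aa0 Ua0]]|nA] := pselect (exists a, (A `&` (U x)°) a); last first.
    by apply: (sub_finite_set _ (finite_set0 X)) => a Aa; apply: nA; exists a.
  apply: (sub_finite_set _ (finite_set1 a0)) => a [Aa Ua].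
  by apply: (UA x).2 => //; exact: interior_subset.
by apply: sub_finite_set fin => y [Ay /KD[x Dx Uy]]; exists x.
Qed.

Section TietzeExtension.
Context {X : topologicalType} {R : realType}.
Hypothesis normalX : normal_space X.
Variable A : set X.
Hypothesis clA : closed A.

Lemma continuous_extension_lt1 (f : X -> R) :
  {within A, continuous f} -> (forall x, A x -> `|f x| < 1) ->
  exists g : X -> R, [/\ continuous g, {in A, f =1 g} & forall x, `|g x| < 1].
Proof.
move=> cf f_lt1.
have [g [fg cg g_le1]] := continuous_bounded_extension normalX clA ltr01 cf
  (fun x Ax => ltW (f_lt1 x Ax)).
pose Z := (fun x => `|g x|) @^-1` [set 1].
have clZ : closed Z.
  apply: preimage_closed; last exact: closed_eq.
  by move=> x _; apply: continuous_comp (cg x) _; exact: norm_continuous.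
have ZA0 : Z `&` A = set0.
  apply/seteqP; split => // x [/= gx1 Ax].
  by move: (f_lt1 x Ax); rewrite (fg x (mem_set Ax)) gx1 ltxx.
(* Damp [g] where it reaches norm 1, away from A. *)
have [u [cu uZ uA u01]] := @urysohn_ext_itv X R normalX _ _ _ _ clZ clA ZA0 ltr01.
exists (fun x => g x * u x); split => [x||x].
- exact: continuousM (cg x) (cu x).
- move=> x xA; rewrite /= (uA (u x)) ?mulr1; first exact: fg.
  by exists x; first exact: set_mem.
have /andP[u0 u1] : 0 <= u x <= 1 by have := u01 _ (imageT u x); rewrite /= in_itv.
have [gx1|gx1] := eqVneq `|g x| 1.
  by rewrite (uZ (u x)) ?mulr0 ?normr0 //; exists x.
rewrite normrM (ger0_norm u0) (le_lt_trans (ler_piMr _ u1)) //.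
by rewrite lt_neqAle gx1 g_le1.
Qed.

Lemma continuous_extension (f : X -> R) : {within A, continuous f} ->
  exists g : X -> R, continuous g /\ {in A, f =1 g}.
Proof.
move=> cf.
(* Transport along the homeomorphism [sg] of R onto ]-1, 1[, with inverse [tau]. *)
pose sg (t : R) := t / (1 + `|t|); pose tau (s : R) := s / (1 - `|s|).
have pos (t : R) : 0 < 1 + `|t| by rewrite ltr_pwDl.
have normsg (t : R) : `|sg t| = `|t| / (1 + `|t|).
  by rewrite /sg normrM normfV (gtr0_norm (pos t)).
have sgK (t : R) : tau (sg t) = t.
  have t0 : 1 + `|t| != 0 by rewrite gt_eqF.
  have sgN : 1 - `|t| / (1 + `|t|) = (1 + `|t|)^-1 by field.
  by rewrite /tau normsg sgN invrK divfK.
have sg_lt1 (t : R) : `|sg t| < 1 by rewrite normsg ltr_pdivrMr //; lra.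
have csg : continuous sg.
  move=> t; apply: (@continuousM _ _ id (fun t => (1 + `|t|)^-1)); first exact: cvg_id.
  apply: continuousV; first by rewrite gt_eqF.
  by apply: continuousD; [exact: cvg_cst|exact: norm_continuous].
have [g [cg fg g_lt1]] := @continuous_extension_lt1 (sg \o f)
  (fun x => continuous_comp (cf x) (csg _)) (fun x _ => sg_lt1 (f x)).
exists (tau \o g); split => [x|x Ax]; last by rewrite /= -fg //= sgK.
apply: (@continuousM _ _ g (fun x => (1 - `|g x|)^-1)); first exact: cg.
apply: continuousV; first by rewrite subr_eq0 eq_sym lt_eqF.
apply: continuousB; first exact: cvg_cst.
apply: continuous_comp (cg x) _; exact: norm_continuous.
Qed.

End TietzeExtension.

Lemma discrete_extension {R : realType} (S : set R) (c : R -> R) :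
  discrete_subset S -> exists phi : R -> R, continuous phi /\ {in S, c =1 phi}.
Proof.
move=> dS; apply: (@continuous_extension R R pseudometric_normal S).
  by apply: discrete_subset_closed dS; exact/hausdorff_accessible/Rhausdorff.
exact: discrete_subset_within.
Qed.

Section Coordinates.
Context {R : realType} {n : nat}.
Implicit Types (x : 'rV[R]_n) (i j k : 'I_n).

Definition unitv j : 'rV[R]_n := delta_mx 0 j.

Lemma coordZ_unitv (a : R) j k : (a *: unitv j) ord0 k = if j == k then a else 0.
Proof. by rewrite !mxE /= eq_sym; case: eqP; rewrite ?mulr1 ?mulr0. Qed.

Lemma coord_addZ x (a : R) j k :
  (x + a *: unitv j) ord0 k = x ord0 k + (if j == k then a else 0).
Proof. by rewrite mxE coordZ_unitv. Qed.

Definition shear i j (phi : R -> R) x : 'rV[R]_n := x + phi (x ord0 i) *: unitv j.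

Lemma shear_continuous i j phi : continuous phi -> continuous (shear i j phi).
Proof.
move=> cphi x; apply: (@continuousD _ _ _ id); first exact: cvg_id.
by apply: continuousZr_tmp; apply: continuous_comp; [exact: coord_continuous|exact: cphi].
Qed.

Lemma shear_homeo i j phi : i != j -> continuous phi ->
  self_homeomorphism (shear i j phi).
Proof.
move=> ij cphi; have ji : (j == i) = false by rewrite eq_sym (negPf ij).
exists (shear i j (fun t => - phi t)); split => [x|x||].
- by rewrite /shear coord_addZ ji addr0 scaleNr addrK.
- by rewrite /shear coord_addZ ji addr0 scaleNr subrK.
- exact: shear_continuous.
- by apply: shear_continuous => t; exact: continuousN (cphi t).
Qed.

Definition on_axis i0 : set 'rV[R]_n := [set x | forall k, k != i0 -> x ord0 k = 0].

Lemma on_axisE i0 x : on_axis i0 x -> x = x ord0 i0 *: unitv i0.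
Proof.
move=> x0; apply/rowP => k; rewrite coordZ_unitv.
by case: (eqVneq i0 k) => [->|i0k] //; rewrite x0 // eq_sym.
Qed.

Lemma discrete_on_axis_coord i0 (D : set 'rV[R]_n) :
  discrete_subset D -> D `<=` on_axis i0 -> discrete_subset [set d ord0 i0 | d in D].
Proof.
move=> dD D0 t; have [U Ut UD] := dD (t *: unitv i0).
have cZ : continuous (fun s : R => s *: unitv i0 : 'rV[R]_n).
  by move=> s; apply: continuousZr_tmp; exact: cvg_id.
exists ((fun s : R => s *: unitv i0) @^-1` U); first exact: cZ.
move=> _ _ [a Da <-] [b Db <-] /=.
by rewrite -(on_axisE (D0 a Da)) -(on_axisE (D0 b Db)) => Ua Ub; rewrite (UD a b).
Qed.

(* Three shears: (s, 0) |-> (s, t) |-> (t, t) |-> (t, 0) in the (i0, i1)-plane. *)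
Lemma axis_extension i0 i1 (A B : set 'rV[R]_n) (f : 'rV[R]_n -> 'rV[R]_n) :
  i0 != i1 -> discrete_subset A -> discrete_subset B ->
  A `<=` on_axis i0 -> B `<=` on_axis i0 -> f @` A `<=` B -> {in A &, injective f} ->
  exists h, self_homeomorphism h /\ forall a, A a -> h a = f a.
Proof.
move=> i01 dA dB A0 B0 fAB finj.
have [phi1 [cphi1 phi1E]] := discrete_extension
  (fun s => f (s *: unitv i0) ord0 i0) (discrete_on_axis_coord dA A0).
have [phi2 [cphi2 phi2E]] := discrete_extension
  (fun t => t - pinv A f (t *: unitv i0) ord0 i0) (discrete_on_axis_coord dB B0).
exists (shear i0 i1 (fun t => - t) \o shear i1 i0 phi2 \o shear i0 i1 phi1); split.
  have i10 : i1 != i0 by rewrite eq_sym.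
  have cN : continuous (fun t : R => - t) by move=> t; exact: continuousN cvg_id.
  by do 2?apply: self_homeomorphism_comp; exact: shear_homeo.
move=> a Aa; set s := a ord0 i0; set t := f a ord0 i0.
have Bfa : B (f a) by apply: fAB; exists a.
have aE : a = s *: unitv i0 := on_axisE (A0 a Aa).
have faE : f a = t *: unitv i0 := on_axisE (B0 _ Bfa).
have phi1s : phi1 s = t.
  by rewrite -phi1E -?aE //; apply/mem_set; exists a.
have phi2t : phi2 t = t - s.
  rewrite -phi2E /= -?faE ?pinvKV //; first exact/mem_set.
  by apply/mem_set; exists (f a).
have i10 : (i1 == i0) = false by rewrite eq_sym (negPf i01).
rewrite /= /shear faE -/s phi1s aE.
rewrite !coord_addZ !coordZ_unitv eqxx (negPf i01) add0r phi2t.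
apply/rowP => k; rewrite !coord_addZ !coordZ_unitv.
by case: (eqVneq i0 k) => [<-|_]; rewrite ?i10 ?eqxx; case: (i1 == k); lra.
Qed.

End Coordinates.

Section SquaredNorm.
Context {R : realType} {n : nat}.
Implicit Types (x : 'rV[R]_n) (A : set 'rV[R]_n).

Definition sqnorm x : R := \sum_i x ord0 i ^+ 2.

Lemma sqnorm_ge0 x : 0 <= sqnorm x.
Proof. by apply: sumr_ge0 => i _; exact: sqr_ge0. Qed.

Lemma coord_le_sqnorm x i : `|x ord0 i| <= 1 + sqnorm x.
Proof.
have : x ord0 i ^+ 2 <= sqnorm x.
  by rewrite /sqnorm (bigD1 i) //= lerDl; apply: sumr_ge0 => j _; exact: sqr_ge0.
rewrite -real_normK ?num_real //; have := normr_ge0 (x ord0 i); nra.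
Qed.

Lemma sqnorm_continuous : continuous sqnorm.
Proof.
rewrite (_ : sqnorm = \sum_i (fun x => x ord0 i ^+ 2)); last by rewrite fct_sumE.
apply: (big_ind (fun g : 'rV[R]_n -> R => continuous g)) => [|g h cg ch x|i _ x].
- exact: cst_continuous.
- exact: continuousD (cg x) (ch x).
- by apply: continuousM; exact: coord_continuous.
Qed.

Lemma sqnorm_subZ x (s : R) k :
  sqnorm (x - s *: unitv k) = sqnorm x - 2 * s * x ord0 k + s ^+ 2.
Proof.
rewrite -scaleNr /sqnorm (bigD1 k) //= [in RHS](bigD1 k) //= coord_addZ eqxx.
rewrite (eq_bigr (fun i => x ord0 i ^+ 2)) => [|i ik]; first by ring.
by rewrite coord_addZ eq_sym (negPf ik) addr0.
Qed.

Definition cube (M : R) : set 'rV[R]_n := [set x | forall i, `[-M, M]%classic (x ord0 i)].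

Lemma cube_compact M : compact (cube M).
Proof. exact: (@rV_compact _ n (fun _ => `[-M, M]%classic) (fun i => @segment_compact R _ _)). Qed.

Lemma sqnorm_cube x M : 1 + sqnorm x <= M -> cube M x.
Proof.
by move=> xM i; rewrite /= in_itv /= -ler_norml (le_trans (coord_le_sqnorm x i)).
Qed.

Lemma discrete_countable A : discrete_subset A -> countable A.
Proof.
move=> dA; apply: (@sub_countable _ _ _ (\bigcup_(k in [set: nat]) (A `&` cube k%:R))).
  apply: subset_card_le => x Ax; exists (Num.Def.archi_bound (1 + sqnorm x)) => //.
  split => //; apply/sqnorm_cube/ltW/archi_boundP.
  by rewrite addr_ge0 ?sqnorm_ge0.
apply: bigcup_countable => // k _; apply: finite_set_countable.
by apply: (@discrete_compact_finite 'rV[R]_n) => //; exact: cube_compact.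
Qed.

(* The points of A with squared norm within 1 of t lie in a cube, hence are
   finitely many; removing the image of those off the sphere of squared radius t
   leaves a neighbourhood of t. *)
Lemma discrete_sqnorm_image A : discrete_subset A -> discrete_subset (sqnorm @` A).
Proof.
move=> dA t; pose F := sqnorm @` (A `&` cube (`|t| + 2)) `\ t.
have clF : closed F.
  apply: (accessible_finite_set_closed.1 (hausdorff_accessible (@Rhausdorff R))).
  apply: sub_finite_set (@subDsetl _ _ [set t]) _; apply: finite_image.
  by apply: (@discrete_compact_finite 'rV[R]_n) => //; exact: cube_compact.
suff onlyt : forall r, (sqnorm @` A) r -> (ball t 1 `&` ~` F) r -> r = t.
  exists (ball t 1 `&` ~` F) => [|a b Aa Ab Ua Ub]; last by rewrite (onlyt a Aa Ua) (onlyt b Ab Ub).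
  apply: filterI; first exact: nbhsx_ballx.
  by apply: open_nbhs_nbhs; split; [exact: closed_openC | move=> [_ /=]; apply].
move=> _ [x Ax <-] [xt nFx]; apply: contrapT => xNt; apply: nFx; split => //.
exists x => //; split => //; apply: sqnorm_cube.
have : sqnorm x - t <= `|t - sqnorm x| by rewrite distrC ler_norm.
by move: xt; rewrite /ball /= => xt; have := ler_norm t; lra.
Qed.

End SquaredNorm.

Lemma exists_notin_countable {R : realType} (C : set R) : countable C -> exists s, ~ C s.
Proof.
move=> cC; apply: contrapT => CT.
have CTE : C = setT by apply/seteqP; split => // s _; apply: contrapT => Cs; apply: CT; exists s.
have measT0 := countable_lebesgue_measure0 cC; rewrite CTE in measT0.
have : (lebesgue_measure (`[0%R, 1%R]%classic : set R) <= lebesgue_measure [set: R])%E.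
  by apply: le_measure => //; apply/mem_set; [exact: measurable_itv|exact: measurableT].
rewrite measT0 lebesgue_measure_itv /= lte_fin ltr01 oppr0 adde0.
by rewrite lee_fin ler10.
Qed.

Section GenericCenter.
Context {R : realType} {n : nat}.
Implicit Types (x c : 'rV[R]_n) (A : set 'rV[R]_n).

(* Moving the centre along e_k changes [sqnorm (a - c) - sqnorm (b - c)] by
   [2 s (a_k - b_k)]; each pair with a_k != b_k forbids one value of s. *)
Lemma perturb_center A c k : countable A -> exists s : R,
  forall a b, A a -> A b ->
    sqnorm (a - (c + s *: unitv k)) = sqnorm (b - (c + s *: unitv k)) ->
    a ord0 k = b ord0 k /\ sqnorm (a - c) = sqnorm (b - c).
Proof.
move=> cA.
pose bad := [set (sqnorm (ab.1 - c) - sqnorm (ab.2 - c)) / (2 * (ab.1 ord0 k - ab.2 ord0 k))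
  | ab in A `*` A].
have [|s sNbad] := @exists_notin_countable R bad.
  by apply: sub_countable (card_image_le _ _) _; exact: countableX.
exists s => a b Aa Ab; rewrite !opprD !addrA !sqnorm_subZ !mxE => sq_eq.
have dE : sqnorm (a - c) - sqnorm (b - c) = 2 * s * (a ord0 k - b ord0 k) by lra.
have [akb|akb] := eqVneq (a ord0 k) (b ord0 k).
  by split => //; apply/eqP; rewrite -subr_eq0 dE akb subrr mulr0.
exfalso; apply: sNbad; exists (a, b) => //=.
by rewrite dE; field; rewrite subr_eq0.
Qed.

Lemma generic_center A : countable A ->
  exists c, {in A &, injective (fun a => sqnorm (a - c))}.
Proof.
move=> cA; suff [c Hc] : exists c, forall a b, A a -> A b ->
    sqnorm (a - c) = sqnorm (b - c) -> forall k, k \in enum 'I_n -> a ord0 k = b ord0 k.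
  by exists c => a b /set_mem Aa /set_mem Ab ab; apply/rowP => k; exact: Hc ab k (mem_enum _ _).
elim: (enum 'I_n) => [|k K [c Hc]]; first by exists 0.
have [s Hs] := perturb_center c k cA.
exists (c + s *: unitv k) => a b Aa Ab /(Hs a b Aa Ab)[akb ab] j.
by rewrite inE => /predU1P[->|/(Hc a b Aa Ab ab)].
Qed.

End GenericCenter.

Section PlaneRotation.
Context {R : realType} {n : nat} (i j : 'I_n).
Hypothesis ij : i != j.
Implicit Types (x : 'rV[R]_n) (t : R).

Let ji : (j == i) = false. Proof. by rewrite eq_sym (negPf ij). Qed.

Definition plane_rot t x : 'rV[R]_n :=
  x + ((cos t - 1) * x ord0 i - sin t * x ord0 j) *: unitv i
    + (sin t * x ord0 i + (cos t - 1) * x ord0 j) *: unitv j.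

Lemma plane_rot_coord t x :
  [/\ plane_rot t x ord0 i = cos t * x ord0 i - sin t * x ord0 j,
      plane_rot t x ord0 j = sin t * x ord0 i + cos t * x ord0 j &
      forall k, k != i -> k != j -> plane_rot t x ord0 k = x ord0 k].
Proof.
rewrite /plane_rot !coord_addZ !eqxx ji (negPf ij) !addr0; split; try ring.
by move=> k ki kj; rewrite !coord_addZ eq_sym (negPf ki) eq_sym (negPf kj) !addr0.
Qed.

Lemma sqnorm_plane_rot t x : sqnorm (plane_rot t x) = sqnorm x.
Proof.
have [roti rotj rotk] := plane_rot_coord t x.
rewrite /sqnorm (bigD1 i) // [in RHS](bigD1 i) //= (bigD1 j) 1?eq_sym //=.
rewrite [in RHS](bigD1 j) 1?eq_sym //= (eq_bigr (fun k => x ord0 k ^+ 2)).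
  rewrite !addrA roti rotj; congr (_ + _).
  by rewrite -[RHS]mul1r -(cos2Dsin2 t); ring.
by move=> k /andP[ki kj]; rewrite rotk.
Qed.

Lemma plane_rotK t : cancel (plane_rot t) (plane_rot (- t)).
Proof.
move=> x; suff rotK k : plane_rot (- t) (plane_rot t x) ord0 k = x ord0 k by apply/rowP.
have [roti rotj rotk] := plane_rot_coord t x; have := cos2Dsin2 t.
have [] := plane_rot_coord (- t) (plane_rot t x); rewrite cosN sinN => rot'i rot'j rot'k.
have [->|ki] := eqVneq k i; first by rewrite rot'i roti rotj => cs; rewrite -[RHS]mul1r -cs; ring.
have [->|kj] := eqVneq k j; first by rewrite rot'j roti rotj => cs; rewrite -[RHS]mul1r -cs; ring.
by rewrite rot'k ?rotk.
Qed.

Lemma plane_rot_continuous {T : topologicalType} (th : T -> R) (u : T -> 'rV[R]_n) :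
  continuous th -> continuous u -> continuous (fun y => plane_rot (th y) (u y)).
Proof.
move=> cth cu y.
have ccos : continuous (fun y => cos (th y) - 1).
  move=> z; apply: (@continuousB R R^o); last exact: cst_continuous.
  by apply: continuous_comp; [exact: cth|exact: continuous_cos].
have csin : continuous (fun y => sin (th y)).
  by move=> z; apply: continuous_comp; [exact: cth|exact: continuous_sin].
have cui : continuous (fun y => u y ord0 i).
  by move=> z; exact: continuous_comp (cu z) (coord_continuous (x := u z)).
have cuj : continuous (fun y => u y ord0 j).
  by move=> z; exact: continuous_comp (cu z) (coord_continuous (x := u z)).
rewrite /plane_rot; apply: (@continuousD R _ T); first apply: (@continuousD R _ T).
- exact: cu.
- apply: continuousZr_tmp; apply: (@continuousB R R^o).
    exact: continuousM (ccos y) (cui y).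
  exact: continuousM (csin y) (cuj y).
- apply: continuousZr_tmp; apply: (@continuousD R R^o).
    exact: continuousM (csin y) (cui y).
  exact: continuousM (ccos y) (cuj y).
Qed.

End PlaneRotation.

Lemma exists_rot_angle {R : realType} (u v : R) : exists t : R, sin t * u + cos t * v = 0.
Proof.
have [->|u0] := eqVneq u 0; first by exists (pi / 2); rewrite cos_pihalf mulr0 mul0r addr0.
exists (atan (- v / u)); set t := atan _.
have ct0 : cos t != 0.
  by rewrite cos_atan invr_eq0 gt_eqF // sqrtr_gt0 ltr_pwDl // sqr_ge0.
have -> : sin t = - v / u * cos t by rewrite -[- v / u]atanK /tan mulfVK.
by field.
Qed.

Section Twist.
Context {R : realType} {n : nat} (i j : 'I_n).
Hypothesis ij : i != j.
Implicit Types (x : 'rV[R]_n) (th : R -> R).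

Definition twist th x : 'rV[R]_n := plane_rot i j (th (sqnorm x)) x.

Lemma sqnorm_twist th x : sqnorm (twist th x) = sqnorm x.
Proof. exact: sqnorm_plane_rot. Qed.

Lemma twistK th : cancel (twist th) (twist (fun r => - th r)).
Proof. by move=> x; rewrite /twist sqnorm_plane_rot //; exact: plane_rotK. Qed.

Lemma twist_homeo th : continuous th -> self_homeomorphism (twist th).
Proof.
move=> cth; have thK : (fun r => - - th r) = th by apply/funext => r; rewrite opprK.
have cont th' : continuous th' -> continuous (twist th').
  move=> cth'; apply: plane_rot_continuous => [x|x]; last exact: cvg_id.
  by apply: continuous_comp; [exact: sqnorm_continuous|exact: cth'].
exists (twist (fun r => - th r)); split; first exact: twistK.
- by move=> x; rewrite -{1}thK; exact: twistK.
- exact: cont.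
- by apply: cont => r; exact: continuousN (cth r).
Qed.

Lemma twist_flatten (X : set 'rV[R]_n) :
  discrete_subset X -> {in X &, injective sqnorm} ->
  exists2 th, continuous th & forall x, X x -> twist th x ord0 j = 0.
Proof.
move=> dX sqinj.
have /choice[ang angP] : forall uv : R * R, exists t, sin t * uv.1 + cos t * uv.2 = 0.
  by move=> [u v]; exact: exists_rot_angle.
(* [p r] is the point of X on the sphere of squared radius r. *)
pose p := pinv X sqnorm.
have [th [cth thE]] := discrete_extension
  (fun r => ang (p r ord0 i, p r ord0 j)) (discrete_sqnorm_image dX).
exists th => // x Xx; have [_ -> _] := plane_rot_coord ij (th (sqnorm x)) x.
by rewrite -thE /= /p ?pinvKV //; [exact/mem_set | apply/mem_set; exists x].
Qed.

End Twist.

Section FlattenToAxis.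
Context {R : realType} {n : nat}.

Lemma discrete_to_axis (i0 : 'I_n) (A : set 'rV[R]_n) : discrete_subset A ->
  exists2 H, self_homeomorphism H & H @` A `<=` on_axis i0.
Proof.
move=> dA; have [c cinj] := generic_center (discrete_countable dA).
have [H [hH _ H0]] : exists H, [/\ self_homeomorphism H, {in A &, injective (sqnorm \o H)}
    & forall a k, A a -> k \in enum 'I_n -> k != i0 -> H a ord0 k = 0].
  elim: (enum 'I_n) => [|k K [H [hH Hinj H0]]].
    by exists (fun x => x - c); split => //; exact: translation_homeo.
  have [->|ki0] := eqVneq k i0.
    by exists H; split => // a k' Aa /predU1P[-> /eqP //|]; exact: H0.
  have HAinj : {in H @` A &, injective sqnorm}.
    move=> _ _ /set_mem[a Aa <-] /set_mem[b Ab <-] /(Hinj a b) -> //; exact/mem_set.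
  have i0k : i0 != k by rewrite eq_sym.
  have [th cth thE] := twist_flatten i0k (discrete_subset_image hH dA) HAinj.
  exists (twist i0 k th \o H); split.
  - exact/self_homeomorphism_comp/hH/twist_homeo.
  - by move=> a b Aa Ab; rewrite /= !sqnorm_twist //; exact: Hinj.
  - move=> a k' Aa /predU1P[->|k'K k'i0] /=; first by rewrite thE //; exists a.
    have [->|k'k] := eqVneq k' k; first by rewrite thE //; exists a.
    by have [_ _ ->] := plane_rot_coord i0k (th (sqnorm (H a))) (H a); rewrite ?H0.
by exists H => // _ [a Aa <-] k; exact: H0 (mem_enum _ k).
Qed.

End FlattenToAxis.

Lemma sDH_rV (R : realType) (n : nat) : (1 < n)%N -> sDH 'rV[R]_n.
Proof.
move=> n1; split; first exact: norm_hausdorff.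
move=> A B f dA dB [fAB finj _].
pose i0 : 'I_n := Ordinal (ltnW n1); pose i1 : 'I_n := Ordinal n1.
have i01 : i0 != i1 by [].
have [HA hA A0] := discrete_to_axis i0 dA.
have [HB hB B0] := discrete_to_axis i0 dB.
have [gA [_ HAK _]] := self_homeomorphism_inv hA.
have [gB [hgB HBK _]] := self_homeomorphism_inv hB.
have [k [hk kE]] : exists k, self_homeomorphism k /\
    forall a, (HA @` A) a -> k a = (HB \o f \o gA) a.
  apply: (axis_extension i01 (discrete_subset_image hA dA) (discrete_subset_image hB dB) A0 B0).
    by move=> _ [_ [a Aa <-] <-]; exists (f a); [exact: fAB | rewrite /= HAK].
  move=> _ _ /set_mem[a Aa <-] /set_mem[b Ab <-]; rewrite /= !HAK => /(can_inj HBK).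
  by move/finj => -> //; exact/mem_set.
exists (gB \o k \o HA); split; first exact/self_homeomorphism_comp/hA/self_homeomorphism_comp.
by move=> a Aa; rewrite /= kE /= ?HAK ?HBK //; exists a.
Qed.

Unset Implicit Arguments.
Theorem mainTheorem9 (R : realType) (n : nat) (hn : (2 < n)%N) :
  sDH 'rV[R]_n.
Proof. exact: sDH_rV (ltnW hn). Qed.
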